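(* Let $d\in\{2,3\}$, $k\ge 2$, and let $\mathcal P=\{p_1,\dots,p_k\}$ be distinct points in $\mathbb R^d$. For $x\notin\mathcal P$ let $u_i(x)=\frac{p_i-x}{\|p_i-x\|}$, and for $x\notin\mathcal P$ with $\sum_{i=1}^k u_i(x)\neq0$ let $v(x)=\frac{\sum_{i=1}^k u_i(x)}{\|\sum_{i=1}^k u_i(x)\|}$. Let $S(x)=\sum_{1\le i<j\le k}u_i(x)^\top u_j(x)$ be the sum of the cosines of the pairwise angles between the bearings. Then at every such $x$, the directional derivative of $S$ in the direction $v(x)$ satisfies $\nabla S(x)^\top v(x)\le 0$, with strict inequality unless $x$ and all points of $\mathcal P$ lie on a common line. In other words, moving in the direction $v$ decreases the sum of the cosines of the pairwise angles between the bearings $u_i$.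
   Context: $u_i(x)$ is the bearing (unit direction) from the position $x$ to the landmark $p_i$. The points with $\sum_i u_i(x)=0$ (outside $\mathcal P$) are geometric medians of $\mathcal P$. *)

From HB Require Import structures.
From mathcomp Require Import all_boot all_order all_algebra.
From mathcomp Require Import all_classical all_reals all_analysis.
Set Implicit Arguments. Unset Strict Implicit. Unset Printing Implicit Defensive.
Import Order.TTheory GRing.Theory Num.Theory.
Import numFieldNormedType.Exports.
Local Open Scope ring_scope.

(* Euclidean inner product and norm on R^d (the library's norm on matrices
   is the max-norm, so we define the Euclidean one explicitly). *)
Definition dotp {R : realType} {d : nat} (a b : 'rV[R]_d) : R :=
  \sum_(i < d) a 0 i * b 0 i.

Definition enorm {R : realType} {d : nat} (a : 'rV[R]_d) : R :=
  Num.sqrt (dotp a a).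

Definition bearing {R : realType} {d k : nat} (p : 'I_k -> 'rV[R]_d)
  (i : 'I_k) (x : 'rV[R]_d) : 'rV[R]_d :=
  (enorm (p i - x))^-1 *: (p i - x).

Definition sum_bearings {R : realType} {d k : nat} (p : 'I_k -> 'rV[R]_d)
  (x : 'rV[R]_d) : 'rV[R]_d := \sum_(i < k) bearing p i x.

Definition vdir {R : realType} {d k : nat} (p : 'I_k -> 'rV[R]_d)
  (x : 'rV[R]_d) : 'rV[R]_d :=
  (enorm (sum_bearings p x))^-1 *: sum_bearings p x.

Definition Scos {R : realType} {d k : nat} (p : 'I_k -> 'rV[R]_d)
  (x : 'rV[R]_d) : R :=
  \sum_(i < k) \sum_(j < k | (i < j)%N) dotp (bearing p i x) (bearing p j x).

Definition collinear_with {R : realType} {d k : nat} (p : 'I_k -> 'rV[R]_d)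
  (x : 'rV[R]_d) : Prop :=
  exists (a b : 'rV[R]_d), b != 0 /\ (exists t : R, x = a + t *: b) /\
    (forall i, exists t : R, p i = a + t *: b).

From HB Require Import structures.
From mathcomp Require Import all_boot all_order all_algebra.
From mathcomp Require Import all_classical all_reals all_analysis.
From mathcomp Require Import ring.
Import Order.TTheory GRing.Theory Num.Theory.
Import numFieldNormedType.Exports.
Set Implicit Arguments. Unset Strict Implicit. Unset Printing Implicit Defensive.
Local Open Scope ring_scope.

(* Write r_i = |p_i - x| and U = sum_i u_i.  Since every bearing is a unit
   vector, S = (|U|^2 - k) / 2, so D_w S = sum_i <D_w u_i, U> where
   D_w u_i = (<u_i, w> u_i - w) / r_i.  For w = U / |U| the i-th term is
   -|U - <u_i, U> u_i|^2 / (|U| r_i).  Hence the derivative is nonpositive,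
   and it vanishes only if U is parallel to every u_i, i.e. if all p_i lie on
   the line through x in direction U. *)

Lemma sum_lt_pairs (V : zmodType) k (F : 'I_k -> 'I_k -> V) :
  \sum_(i < k) \sum_(j < k | (i < j)%N) (F i j + F j i) =
  \sum_(i < k) \sum_(j < k) F i j - \sum_(i < k) F i i.
Proof.
have row_split i : \sum_(j < k) F i j =
    \sum_(j < k | (i < j)%N) F i j + \sum_(j < k | (j < i)%N) F i j + F i i.
  rewrite (bigD1 i) //= addrC (bigID (fun j : 'I_k => (i < j)%N)) /=.
  by congr (_ + _ + _); apply: eq_bigl => j;
    rewrite -(val_eqE j i) neq_ltn; case: ltngtP.
have swap : \sum_(i < k) \sum_(j < k | (i < j)%N) F j i =
    \sum_(i < k) \sum_(j < k | (j < i)%N) F i j.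
  by rewrite (exchange_big_dep xpredT).
under eq_bigr do rewrite big_split.
under [in RHS]eq_bigr do rewrite row_split.
by rewrite !big_split /= swap addrK.
Qed.

Section DirectionalDerivatives.
Variables (R : realType) (d : nat).
Implicit Types (f : 'rV[R]_d -> R) (c x w : 'rV[R]_d).

Lemma differentiable_sub_coord c x l : differentiable (fun y => (c - y) 0 l) x.
Proof.
rewrite (_ : (fun y => _) = cst (c 0 l) - (fun y : 'rV[R]_d => y 0 l)).
  exact/differentiableB/differentiable_coord.
by apply/funext => y; rewrite !mxE.
Qed.

Lemma derive_sub_coord c x w l : 'D_w (fun y => (c - y) 0 l) x = - w 0 l.
Proof.
rewrite /derive; apply/lim_near_cst => //=; near=> h.
have h_neq0 : h != 0 by near: h; exact: nbhs_dnbhs_neq.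
by rewrite !mxE /GRing.scale /=; field.
Unshelve. all: by end_near. Qed.

Lemma differentiable_big n (P : pred 'I_n) (F : 'I_n -> 'rV[R]_d -> R) x :
  (forall i, P i -> differentiable (F i) x) ->
  differentiable (fun y => \sum_(i < n | P i) F i y) x.
Proof.
move=> dF; rewrite (_ : (fun y => _) =
  \sum_(i < n) (fun y => if P i then F i y else 0)); last first.
  by rewrite fct_sumE; apply/funext => y; rewrite big_mkcond.
apply: differentiable_sum => i /=.
by case: (P i) (dF i) => [/(_ isT) //|_]; exact: differentiable_cst.
Qed.

Lemma derive_big n (P : pred 'I_n) (F : 'I_n -> 'rV[R]_d -> R) x w :
  (forall i, P i -> differentiable (F i) x) ->
  'D_w (fun y => \sum_(i < n | P i) F i y) x = \sum_(i < n | P i) 'D_w (F i) x.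
Proof.
move=> dF; rewrite (_ : (fun y => _) =
  \sum_(i < n) (fun y => if P i then F i y else 0)); last first.
  by rewrite fct_sumE; apply/funext => y; rewrite big_mkcond.
rewrite derive_sum => [|i]; last first.
  by apply: diff_derivable; case: (P i) (dF i) => [/(_ isT) //|_];
    exact: differentiable_cst.
rewrite [RHS]big_mkcond; apply: eq_bigr => i _ /=.
by case: (P i) => //; rewrite derive_cst.
Qed.

Let differentiable_sqrtr (r : R) : 0 < r -> differentiable (@Num.sqrt R) r.
Proof. by move=> r_gt0; apply/derivable1_diffP; case: (is_derive1_sqrt r_gt0). Qed.

Lemma differentiable_sqrt f x : differentiable f x -> 0 < f x ->
  differentiable (fun y => Num.sqrt (f y)) x.
Proof. by move=> df /differentiable_sqrtr; apply: differentiable_comp. Qed.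

Lemma derive_sqrt_comp f x w : differentiable f x -> 0 < f x ->
  'D_w (fun y => Num.sqrt (f y)) x = 'D_w f x / (2 * Num.sqrt (f x)).
Proof.
move=> df fx_gt0; have dsqrt := differentiable_sqrtr fx_gt0.
rewrite (deriveE w (differentiable_comp df dsqrt)) diff_comp //= diff1E //.
by rewrite derive1E derive_sqrt // deriveE.
Qed.

End DirectionalDerivatives.

Definition rejection {R : realType} {d : nat} (u a : 'rV[R]_d) : 'rV[R]_d :=
  a - dotp u a *: u.

Section DotProduct.
Variables (R : realType) (d : nat).
Implicit Types (a b c : 'rV[R]_d).

Lemma dotpC a b : dotp a b = dotp b a.
Proof. by apply: eq_bigr => l _; rewrite mulrC. Qed.

Lemma dotpDl a b c : dotp (a + b) c = dotp a c + dotp b c.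
Proof. by rewrite /dotp -big_split; apply: eq_bigr => l _; rewrite mxE mulrDl. Qed.

Lemma dotpNl a b : dotp (- a) b = - dotp a b.
Proof. by rewrite /dotp -sumrN; apply: eq_bigr => l _; rewrite mxE mulNr. Qed.

Lemma dotpZl s a b : dotp (s *: a) b = s * dotp a b.
Proof. by rewrite /dotp mulr_sumr; apply: eq_bigr => l _; rewrite mxE mulrA. Qed.

Lemma dotp_suml n (F : 'I_n -> 'rV[R]_d) b :
  dotp (\sum_(i < n) F i) b = \sum_(i < n) dotp (F i) b.
Proof.
rewrite /dotp exchange_big; apply: eq_bigr => l _.
by rewrite summxE mulr_suml.
Qed.

Lemma dotp_sumr n a (F : 'I_n -> 'rV[R]_d) :
  dotp a (\sum_(i < n) F i) = \sum_(i < n) dotp a (F i).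
Proof. by rewrite dotpC dotp_suml; apply: eq_bigr => i _; rewrite dotpC. Qed.

Lemma dotpBl a b c : dotp (a - b) c = dotp a c - dotp b c.
Proof. by rewrite dotpDl dotpNl. Qed.

Lemma dotpBr a b c : dotp a (b - c) = dotp a b - dotp a c.
Proof. by rewrite dotpC dotpBl !(dotpC a). Qed.

Lemma dotpZr s a b : dotp a (s *: b) = s * dotp a b.
Proof. by rewrite dotpC dotpZl dotpC. Qed.

Lemma dotp_ge0 a : 0 <= dotp a a.
Proof. by apply: sumr_ge0 => l _; rewrite -expr2 sqr_ge0. Qed.

Lemma dotp_eq0 a : (dotp a a == 0) = (a == 0).
Proof.
apply/idP/eqP => [|->]; last by rewrite /dotp big1 // => l _; rewrite mxE mul0r.
move=> /eqP a2_eq0; apply/rowP => l; rewrite mxE.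
have sq_ge0 (j : 'I_d) : true -> 0 <= a 0 j * a 0 j by rewrite -expr2 sqr_ge0.
by have /eqP := psumr_eq0P sq_ge0 a2_eq0 (i := l) isT; rewrite mulf_eq0 orbb => /eqP.
Qed.

Lemma enorm_sqr a : enorm a ^+ 2 = dotp a a.
Proof. by rewrite sqr_sqrtr // dotp_ge0. Qed.

Lemma dotp_gt0 a : (0 < dotp a a) = (a != 0).
Proof. by rewrite lt_def dotp_eq0 dotp_ge0 andbT. Qed.

Lemma enorm_gt0 a : (0 < enorm a) = (a != 0).
Proof. by rewrite sqrtr_gt0 dotp_gt0. Qed.

Lemma dotp_normalize a : a != 0 ->
  dotp ((enorm a)^-1 *: a) ((enorm a)^-1 *: a) = 1.
Proof.
rewrite -enorm_gt0 => a_gt0.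
by rewrite dotpZl dotpZr -enorm_sqr; field; rewrite gt_eqF.
Qed.

Lemma dotp_rejection u a : dotp u u = 1 ->
  dotp (rejection u a) (rejection u a) = dotp a a - dotp u a ^+ 2.
Proof.
move=> u_unit; rewrite /rejection !(dotpBl, dotpBr, dotpZl, dotpZr) u_unit (dotpC a u).
by rewrite mulr1 expr2; ring.
Qed.

End DotProduct.

Section Distance.
Variables (R : realType) (d : nat).
Implicit Types (c x w : 'rV[R]_d).

Lemma differentiable_dotp_sub c x :
  differentiable (fun y => dotp (c - y) (c - y)) x.
Proof.
rewrite /dotp; apply: differentiable_big => l _.
by apply: differentiableM; exact: differentiable_sub_coord.
Qed.

Lemma derive_dotp_sub c x w :
  'D_w (fun y => dotp (c - y) (c - y)) x = - 2 * dotp (c - x) w.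
Proof.
rewrite /dotp derive_big => [|l _]; last first.
  by apply: differentiableM; exact: differentiable_sub_coord.
rewrite mulr_sumr; apply: eq_bigr => l _.
rewrite deriveM ?derive_sub_coord; try exact/diff_derivable/differentiable_sub_coord.
rewrite /GRing.scale /=; ring.
Qed.

Lemma differentiable_dist c x : x != c ->
  differentiable (fun y => enorm (c - y)) x.
Proof.
move=> xc; apply: differentiable_sqrt; first exact: differentiable_dotp_sub.
by rewrite dotp_gt0 subr_eq0 eq_sym.
Qed.

Lemma derive_dist c x w : x != c ->
  'D_w (fun y => enorm (c - y)) x = - dotp (c - x) w / enorm (c - x).
Proof.
move=> xc; rewrite /enorm derive_sqrt_comp ?derive_dotp_sub.
- by field; rewrite gt_eqF // -/(enorm _) enorm_gt0 subr_eq0 eq_sym.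
- exact: differentiable_dotp_sub.
- by rewrite dotp_gt0 subr_eq0 eq_sym.
Qed.

End Distance.

Definition dbearing {R : realType} {d k : nat} (p : 'I_k -> 'rV[R]_d)
  (i : 'I_k) (x w : 'rV[R]_d) : 'rV[R]_d :=
  (enorm (p i - x))^-1 *: (dotp (bearing p i x) w *: bearing p i x - w).

Section Bearing.
Variables (R : realType) (d k : nat) (p : 'I_k -> 'rV[R]_d) (i : 'I_k).
Variable x : 'rV[R]_d.
Hypothesis x_neq_pi : x != p i.

Lemma landmark_dist_gt0 : 0 < enorm (p i - x).
Proof. by rewrite enorm_gt0 subr_eq0 eq_sym. Qed.

Let r_neq0 : enorm (p i - x) != 0.
Proof. by rewrite gt_eqF // landmark_dist_gt0. Qed.

Lemma dotp_bearing : dotp (bearing p i x) (bearing p i x) = 1.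
Proof. by rewrite dotp_normalize // subr_eq0 eq_sym. Qed.

Let bearing_coordE l :
  (fun y => bearing p i y 0 l) = (fun y => (enorm (p i - y))^-1 * (p i - y) 0 l).
Proof. by apply/funext => y; rewrite mxE. Qed.

Lemma differentiable_bearing_coord l :
  differentiable (fun y => bearing p i y 0 l) x.
Proof.
rewrite bearing_coordE; apply: differentiableM; last exact: differentiable_sub_coord.
exact/differentiableV/r_neq0/differentiable_dist.
Qed.

Lemma derive_bearing_coord w l :
  'D_w (fun y => bearing p i y 0 l) x = dbearing p i x w 0 l.
Proof.
rewrite bearing_coordE deriveM; last 2 first.
- exact/diff_derivable/differentiableV/r_neq0/differentiable_dist.
- exact/diff_derivable/differentiable_sub_coord.
rewrite deriveV //; last exact/diff_derivable/differentiable_dist.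
rewrite derive_dist // derive_sub_coord /dbearing /bearing !mxE dotpZl.
by rewrite /GRing.scale /=; field.
Qed.

Lemma dotp_dbearing_bearing w : dotp (dbearing p i x w) (bearing p i x) = 0.
Proof.
by rewrite /dbearing dotpZl dotpBl dotpZl dotp_bearing mulr1 dotpC subrr mulr0.
Qed.

End Bearing.

Section SumOfCosines.
Variables (R : realType) (d k : nat) (p : 'I_k -> 'rV[R]_d) (x : 'rV[R]_d).
Hypothesis x_notin_P : forall i, x != p i.

Let dist_gt0 i : 0 < enorm (p i - x) := landmark_dist_gt0 (x_notin_P i).

Let differentiable_bearing_prod i j l :
  differentiable (fun y => bearing p i y 0 l * bearing p j y 0 l) x.
Proof. by apply: differentiableM; exact: differentiable_bearing_coord. Qed.

Lemma differentiable_Scos : differentiable (Scos p) x.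
Proof.
rewrite /Scos /dotp.
by do 3![apply: differentiable_big => ? _]; exact: differentiable_bearing_prod.
Qed.

Lemma derive_Scos w :
  'D_w (Scos p) x = \sum_(i < k) dotp (dbearing p i x w) (sum_bearings p x).
Proof.
transitivity (\sum_(i < k) \sum_(j < k | (i < j)%N)
    (dotp (dbearing p i x w) (bearing p j x) + dotp (dbearing p j x w) (bearing p i x))).
  rewrite /Scos derive_big => [|i _]; last first.
    by do 2![apply: differentiable_big => ? _]; exact: differentiable_bearing_prod.
  apply: eq_bigr => i _; rewrite derive_big => [|j _]; last first.
    by apply: differentiable_big => ? _; exact: differentiable_bearing_prod.
  apply: eq_bigr => j _; rewrite /dotp derive_big => [|l _]; last first.
    exact: differentiable_bearing_prod.
  rewrite -big_split.
  apply: eq_bigr => l _; rewrite deriveM; try exact/diff_derivable/differentiable_bearing_coord.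
  by rewrite !derive_bearing_coord // /GRing.scale /=; ring.
(* the diagonal terms vanish because every bearing has unit length *)
rewrite sum_lt_pairs [X in _ - X]big1 => [|i _]; last exact: dotp_dbearing_bearing.
by rewrite subr0; apply: eq_bigr => i _; rewrite /sum_bearings dotp_sumr.
Qed.

Lemma derive_Scos_vdir : sum_bearings p x != 0 ->
  'D_(vdir p x) (Scos p) x = - \sum_(i < k)
    dotp (rejection (bearing p i x) (sum_bearings p x))
         (rejection (bearing p i x) (sum_bearings p x))
    / (enorm (sum_bearings p x) * enorm (p i - x)).
Proof.
move=> U_neq0; rewrite derive_Scos -sumrN; apply: eq_bigr => i _.
rewrite dotp_rejection ?dotp_bearing // /dbearing /vdir.
rewrite !(dotpZl, dotpBl, dotpZr); field.
by rewrite !gt_eqF ?dist_gt0 ?enorm_gt0 ?andbT.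
Qed.

Lemma collinear_with_rejection0 b : b != 0 ->
  (forall i, rejection (bearing p i x) b = 0) -> collinear_with p x.
Proof.
move=> b_neq0 rej0; exists x, b; split => //.
split=> [|i]; first by exists 0; rewrite scale0r addr0.
set g := dotp (bearing p i x) b.
have b_eq : b = g *: bearing p i x by apply/eqP; rewrite -subr_eq0; apply/eqP/rej0.
have g_neq0 : g != 0 by apply: contraNneq b_neq0 => g0; rewrite b_eq g0 scale0r.
exists (enorm (p i - x) / g); rewrite b_eq /bearing !scalerA mulfVK // mulfV.
  by rewrite scale1r addrC subrK.
by rewrite gt_eqF ?dist_gt0.
Qed.

End SumOfCosines.

Theorem theorem1 (R : realType) (d k : nat) (p : 'I_k -> 'rV[R]_d)
  (x : 'rV[R]_d) :
  (d = 2%N \/ d = 3%N) -> (2 <= k)%N -> injective p ->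
  (forall i, x != p i) -> sum_bearings p x != 0 ->
  differentiable (Scos p) x /\
  'd (Scos p) x (vdir p x) <= 0 /\
  (~ collinear_with p x -> 'd (Scos p) x (vdir p x) < 0).
Proof.
move=> _ _ _ x_notin_P U_neq0.
have dS := differentiable_Scos x_notin_P.
rewrite -deriveE // derive_Scos_vdir //.
set U := sum_bearings p x.
have denom_gt0 i : 0 < enorm U * enorm (p i - x).
  by apply: mulr_gt0; [rewrite enorm_gt0 | exact: landmark_dist_gt0].
have term_ge0 i : 0 <= dotp (rejection (bearing p i x) U) (rejection (bearing p i x) U)
    / (enorm U * enorm (p i - x)).
  by rewrite divr_ge0 ?dotp_ge0 ?ltW.
split=> //; split; first by rewrite oppr_le0 sumr_ge0.
move=> not_collinear; rewrite oppr_lt0 lt_def sumr_ge0 ?andbT //.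
apply: contra_notN not_collinear => /eqP terms_sum0.
apply: (collinear_with_rejection0 x_notin_P U_neq0) => i.
have /eqP := psumr_eq0P (fun i _ => term_ge0 i) terms_sum0 (i := i) isT.
by rewrite mulf_eq0 invr_eq0 (gt_eqF (denom_gt0 i)) orbF dotp_eq0 => /eqP.
Qed.
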